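(* The projection $\mathbf F^1\to\mathbf T$ is birational onto its image.
   Context: Over $\mathbb C$, $V=H^0\mathcal O_{\mathbb P^3}(1)$, $\check V$ its dual, $R$ and $W$ vector spaces of dimensions $3$ and $4$, $\mathbf T=\mathbb P(\mathrm{Hom}(R\otimes V,W))$. $\mathbf F^1\subset\mathbf T\times\mathbb P(\mathrm{Hom}(W,\check V))$ is the locally closed subset of pairs $(\varphi,\psi)$ with $\psi$ of rank $1$ such that the composite $R\otimes V\otimes V\xrightarrow{\varphi\otimes1}W\otimes V\xrightarrow{\psi\otimes1}\check V\otimes V\to\mathbb C$ factors through $R\otimes S^2V$. *)

From mathcomp Require Import all_boot all_algebra.
From mathcomp Require Import mpoly.
From mathcomp Require Import complex.
From mathcomp Require Import Rstruct.

Set Implicit Arguments.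
Unset Strict Implicit.
Unset Printing Implicit Defensive.
Import GRing.Theory.
Local Open Scope ring_scope.

Definition CC : fieldType := complex.complex Rdefinitions.R.

(* Bases: R has basis indexed by 'I_3, V by 'I_4 (and check V by the dual
   basis), W by 'I_4. *)
(* A point of Hom(R (x) V, W) (affine cone over T):
   phi ((r, v), w) = w-th coordinate of phi(e_r (x) e_v). *)
Definition TIdx : finType := (('I_3 * 'I_4) * 'I_4)%type.
(* A point of Hom(W, check V):
   psi (w, v') = v'-th coordinate (dual basis) of psi(f_w). *)
Definition PIdx : finType := ('I_4 * 'I_4)%type.

Definition TPoint := TIdx -> CC.
Definition PPoint := PIdx -> CC.

Definition psi_mx (psi : PPoint) : 'M[CC]_4 := \matrix_(w < 4, v < 4) psi (w, v).

(* The composite  R (x) V (x) V -> W (x) V -> check V (x) V -> C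
   evaluated at e_r (x) e_v (x) e_v'. *)
Definition composite (phi : TPoint) (psi : PPoint) (r : 'I_3) (v v' : 'I_4) : CC :=
  \sum_(w < 4) phi ((r, v), w) * psi (w, v').

(* It factors through R (x) S^2 V iff it is symmetric in the two V slots. *)
Definition factors_through_RS2V (phi : TPoint) (psi : PPoint) : Prop :=
  forall (r : 'I_3) (v v' : 'I_4), composite phi psi r v v' = composite phi psi r v' v.

(* Affine cone over F^1 inside Hom(R(x)V,W) x Hom(W, check V):
   phi nonzero (a point of T), psi of rank 1, and the factorisation condition.
   All conditions are invariant under independent rescaling of phi and psi,
   so this is exactly the (bi-)cone over F^1 (minus the zero slices). *)
Definition F1cone (phi : TPoint) (psi : PPoint) : Prop :=
  (exists t, phi t != 0) /\ \rank (psi_mx psi) = 1%N /\ factors_through_RS2V phi psi.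

Definition PairIdx : finType := (TIdx + PIdx)%type.

Definition evT (phi : TPoint) : 'I_#|TIdx| -> CC := fun i => phi (enum_val i).

Definition evTP (phi : TPoint) (psi : PPoint) : 'I_#|PairIdx| -> CC :=
  fun i => match enum_val i with inl t => phi t | inr p => psi p end.

Definition homog_of_deg (n : nat) (d : nat) (p : {mpoly CC[n]}) : bool :=
  all (fun m => mdeg m == d) (msupp p).

(* For bi-cones this is the same as Zariski
   density of the corresponding subsets of P(Hom(R(x)V,W)) x P(Hom(W,check V)). *)
Definition zdense (U F : TPoint -> PPoint -> Prop) : Prop :=
  forall P : {mpoly CC[#|PairIdx|]},
    (forall phi psi, U phi psi -> meval (evTP phi psi) P = 0) ->
    forall phi psi, F phi psi -> meval (evTP phi psi) P = 0.

(* The projection (phi,psi) |-> phi, restricted to the (cone over the) locally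
   closed set F, is birational onto its image: there is a rational map from
   the image back to F, inverse to the projection on a dense open subset. *)
Definition proj_birational_onto_image (F : TPoint -> PPoint -> Prop) : Prop :=
  exists (k : nat) (h : 'I_k -> {mpoly CC[#|TIdx|]}) (d e : 'I_k -> nat)
         (G : 'I_k -> PIdx -> {mpoly CC[#|TIdx|]}),
    (forall i, homog_of_deg (d i) (h i)) /\
    (forall i p, homog_of_deg (e i) (G i p)) /\
    (forall i phi psi, F phi psi -> meval (evT phi) (h i) != 0 ->
       exists c : CC, c != 0 /\ forall p, psi p = c * meval (evT phi) (G i p)) /\
    zdense (fun phi psi => F phi psi /\ exists i, meval (evT phi) (h i) != 0) F.

From mathcomp Require Import all_boot all_algebra.
From mathcomp Require Import mpoly complex Rstruct.
From mathcomp Require Import fingroup perm.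

(* A point of F^1 is a rank-one psi = a b^T such that each slice A_r of phi
   maps a into the line of b.  Then b is a common eigenvector of
   B_r = A_r adj(A_0) (r = 1, 2), hence lies in the kernel of the commutator
   C = [B_1, B_2]; where C has corank one, b is proportional to any nonzero
   column of adj C and a to adj(A_0) b.  This recovers [psi] polynomially from
   phi on the opens {det A_0 * (adj C)_ij <> 0}.  These opens are dense in F^1:
   for fixed psi the conditions on phi are linear, so the line joining any
   point of F^1 to a point of F^1 in such an open (obtained by a change of
   bases from the model (1, diag(0,1,2,3), shift)) stays in F^1, and a
   polynomial vanishing on a nonempty open part of a line vanishes on all
   of it. *)

Set Implicit Arguments.
Unset Strict Implicit.
Unset Printing Implicit Defensive.
Import GRing.Theory Num.Theory.
Local Open Scope ring_scope.

Section MatrixFacts.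
Variable F : fieldType.

Lemma adj_mulmx n (A B : 'M[F]_n) : \adj (A *m B) = \adj B *m \adj A.
Proof.
(* Prove it for the invertible characteristic matrices over F[X], then evaluate at X = 0. *)
pose At := char_poly_mx A; pose Bt := char_poly_mx B.
have dA : \det At != 0 by rewrite -/(char_poly A) monic_neq0 // char_poly_monic.
have dB : \det Bt != 0 by rewrite -/(char_poly B) monic_neq0 // char_poly_monic.
have adjM_t : \adj (At *m Bt) = \adj Bt *m \adj At.
  have E : (At *m Bt) *m (\adj (At *m Bt) - \adj Bt *m \adj At) = 0.
    rewrite mulmxBr mul_mx_adj mulmxA -(mulmxA At) mul_mx_adj.
    by rewrite mul_mx_scalar -scalemxAl mul_mx_adj det_mulmx scale_scalar_mx mulrC subrr.
  have := congr1 (mulmx (\adj (At *m Bt))) E.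
  rewrite mulmx0 mulmxA mul_adj_mx mul_scalar_mx => /eqP.
  by rewrite scalemx_eq0 det_mulmx mulf_eq0 (negPf dA) (negPf dB) subr_eq0 => /eqP.
have ev0 C : map_mx (horner_eval 0) (char_poly_mx C) = - C :> 'M[F]_n.
  apply/matrixP => i j; rewrite !mxE /horner_eval.
  by rewrite hornerD hornerN hornerMn hornerX hornerC mul0rn add0r.
have := congr1 (map_mx (horner_eval 0)) adjM_t.
rewrite map_mxM !map_mx_adj map_mxM !ev0 mulNmx mulmxN opprK -!scaleN1r !adjZ => ->.
by rewrite -scalemxAl -scalemxAr scalerA -exprMn mulrN1 opprK expr1n scale1r.
Qed.

Lemma unitmx_adj n (A : 'M[F]_n) : A \in unitmx -> \adj A \in unitmx.
Proof.
move=> uA; have -> : \adj A = \det A *: invmx A.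
  by rewrite -[LHS]mulmx1 -(mulmxV uA) mulmxA mul_adj_mx mul_scalar_mx.
by rewrite unitmxZ ?unitmx_inv // unitfE -unitmxE.
Qed.

Lemma delta_mulmx n (i j : 'I_n) (b : 'cV[F]_n) :
  delta_mx j i *m b = b i 0 *: delta_mx j 0.
Proof.
apply/matrixP => x y; rewrite !mxE (bigD1 i) //= big1 ?addr0.
  by rewrite !mxE eqxx andbT [y]ord1 eqxx andbT mulrC mulr_natr mulrb.
by move=> l /negPf nli; rewrite mxE nli andbF mul0r.
Qed.

Lemma det_add_delta_mx n (C : 'M[F]_n) (i j : 'I_n) :
  \det (C + delta_mx j i) = \det C + \adj C i j.
Proof.
rewrite (expand_det_row _ j) (expand_det_row C j).
have cof l : cofactor (C + delta_mx j i) j l = cofactor C j l.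
  rewrite /cofactor; congr (_ * \det _); apply/matrixP => x y.
  by rewrite !mxE eq_sym (negPf (neq_lift _ _)) andFb addr0.
under eq_bigr do rewrite cof !mxE eqxx andTb mulrDl.
rewrite big_split /= -(expand_det_row C j) (bigD1 i) //= big1 ?addr0.
  by rewrite eqxx mul1r mxE.
by move=> l /negPf nli; rewrite nli mul0r.
Qed.

Lemma kernel_adj_col n (C : 'M[F]_n) (b : 'cV[F]_n) (i j : 'I_n) :
  C *m b = 0 -> \adj C i j != 0 -> \adj C i j *: b = b i 0 *: col j (\adj C).
Proof.
move=> Cb cn0; have [dC|dC] := eqVneq (\det C) 0; last first.
  have uC : C \in unitmx by rewrite unitmxE unitfE.
  have b0 : b = 0 by rewrite -(mulKmx uC b) Cb mulmx0.
  by rewrite b0 scaler0 (_ : (0 : 'cV[F]_n) i 0 = 0) ?scale0r // mxE.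
(* [C + delta_mx j i] is invertible and maps both sides to multiples of [delta_mx j 0]. *)
set D := C + delta_mx j i.
have uD : D \in unitmx by rewrite unitmxE unitfE /D det_add_delta_mx dC add0r.
have Db : D *m b = b i 0 *: delta_mx j 0 by rewrite /D mulmxDl Cb add0r delta_mulmx.
have Dk : D *m col j (\adj C) = \adj C i j *: delta_mx j 0.
  rewrite /D mulmxDl colE mulmxA mul_mx_adj dC mul_scalar_mx scale0r add0r.
  by rewrite -colE delta_mulmx mxE.
apply/eqP; rewrite -subr_eq0; apply/eqP.
rewrite -(mulKmx uD (_ - _)) mulmxBr -!scalemxAr Db Dk !scalerA mulrC subrr.
by rewrite mulmx0.
Qed.

End MatrixFacts.

Section ChartMaps.
Variables (R : comPzRingType) (n : nat).
Implicit Types A : 'M[R]_n.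

Definition quot_mx A0 A := A *m \adj A0.

Definition quot_comm A0 A1 A2 :=
  quot_mx A0 A1 *m quot_mx A0 A2 - quot_mx A0 A2 *m quot_mx A0 A1.

Definition chart_den A0 A1 A2 (i j : 'I_n) : R :=
  \det A0 * \adj (quot_comm A0 A1 A2) i j.

Definition chart_inv A0 A1 A2 (j : 'I_n) : 'M[R]_n :=
  \adj A0 *m col j (\adj (quot_comm A0 A1 A2)) *m (col j (\adj (quot_comm A0 A1 A2)))^T.

End ChartMaps.

Section MapChart.
Variables (R S : comPzRingType) (f : {rmorphism R -> S}) (n : nat).
Implicit Types A : 'M[R]_n.

Lemma map_quot_comm A0 A1 A2 :
  map_mx f (quot_comm A0 A1 A2) = quot_comm (map_mx f A0) (map_mx f A1) (map_mx f A2).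
Proof. by rewrite /quot_comm /quot_mx map_mxB !map_mxM !map_mx_adj. Qed.

Lemma map_chart_den A0 A1 A2 i j :
  f (chart_den A0 A1 A2 i j) = chart_den (map_mx f A0) (map_mx f A1) (map_mx f A2) i j.
Proof. by rewrite /chart_den rmorphM -det_map_mx -map_quot_comm -map_mx_adj [in RHS]mxE. Qed.

Lemma map_chart_inv A0 A1 A2 j :
  map_mx f (chart_inv A0 A1 A2 j) = chart_inv (map_mx f A0) (map_mx f A1) (map_mx f A2) j.
Proof. by rewrite /chart_inv !map_mxM -map_trmx map_col !map_mx_adj map_quot_comm. Qed.

End MapChart.

Section ChartInverse.
Variables (F : fieldType) (n : nat).
Implicit Types (A : 'M[F]_n) (a b : 'cV[F]_n).

Lemma adj_mul_eigen A0 a b l0 : A0 *m a = l0 *: b -> l0 *: (\adj A0 *m b) = \det A0 *: a.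
Proof. by move=> e0; rewrite scalemxAr -e0 mulmxA mul_adj_mx mul_scalar_mx. Qed.

Lemma eigen_neq0 A0 a b l0 : \det A0 != 0 -> a != 0 -> A0 *m a = l0 *: b -> l0 != 0.
Proof.
move=> dn0 an0 /adj_mul_eigen e; apply: contraNneq an0 => l00.
move: e; rewrite l00 scale0r => /esym/eqP.
by rewrite scalemx_eq0 (negPf dn0).
Qed.

Lemma quot_mul_eigen A0 A a b l0 l : A0 *m a = l0 *: b -> A *m a = l *: b ->
  l0 *: (quot_mx A0 A *m b) = (\det A0 * l) *: b.
Proof.
move=> /adj_mul_eigen e0 eA.
by rewrite /quot_mx -mulmxA scalemxAr e0 -scalemxAr eA scalerA.
Qed.

Lemma quot_comm_eigen A0 A1 A2 a b l0 l1 l2 :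
  \det A0 != 0 -> a != 0 ->
  A0 *m a = l0 *: b -> A1 *m a = l1 *: b -> A2 *m a = l2 *: b ->
  quot_comm A0 A1 A2 *m b = 0.
Proof.
move=> dn0 an0 e0 e1 e2; have l0n0 := eigen_neq0 dn0 an0 e0.
have B1 := quot_mul_eigen e0 e1; have B2 := quot_mul_eigen e0 e2.
have eig2 (Q Q' : 'M_n) d d' : l0 *: (Q *m b) = d *: b -> l0 *: (Q' *m b) = d' *: b ->
    (l0 * l0) *: (Q *m Q' *m b) = (d * d') *: b.
  move=> eQ eQ'; rewrite -mulmxA -scalerA scalemxAr eQ' -scalemxAr scalerA mulrC.
  by rewrite -[(d' * l0) *: _]scalerA eQ scalerA mulrC.
suff : (l0 * l0) *: (quot_comm A0 A1 A2 *m b) = 0.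
  by move/eqP; rewrite scalemx_eq0 mulf_eq0 orbb (negPf l0n0) => /eqP.
by rewrite mulmxBl scalerBr (eig2 _ _ _ _ B1 B2) (eig2 _ _ _ _ B2 B1) mulrC subrr.
Qed.

Lemma outer_chart_inv A0 A1 A2 a b l0 l1 l2 (i j : 'I_n) :
  a != 0 -> b != 0 ->
  A0 *m a = l0 *: b -> A1 *m a = l1 *: b -> A2 *m a = l2 *: b ->
  chart_den A0 A1 A2 i j != 0 ->
  exists2 c, c != 0 & a *m b^T = c *: chart_inv A0 A1 A2 j.
Proof.
move=> an0 bn0 e0 e1 e2; rewrite /chart_den mulf_eq0 negb_or => /andP[dn0 kapn0].
have l0n0 := eigen_neq0 dn0 an0 e0.
rewrite /chart_inv; set k := col j _; set kap := \adj _ i j in kapn0.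
have eb : kap *: b = b i 0 *: k := kernel_adj_col (quot_comm_eigen dn0 an0 e0 e1 e2) kapn0.
have bin0 : b i 0 != 0.
  apply: contraNneq bn0 => bi0; move/eqP: eb.
  by rewrite bi0 scale0r scalemx_eq0 (negPf kapn0).
have ea : (kap * \det A0) *: a = (l0 * b i 0) *: (\adj A0 *m k).
  rewrite -[(kap * _) *: _]scalerA -(adj_mul_eigen e0) [LHS]scalerA mulrC.
  by rewrite -[LHS]scalerA scalemxAr eb -scalemxAr scalerA.
have -> : b = (b i 0 / kap) *: k by rewrite mulrC -scalerA -eb scalerA mulVf ?scale1r.
have -> : a = (l0 * b i 0 / (kap * \det A0)) *: (\adj A0 *m k).
  by rewrite mulrC -scalerA -ea scalerA mulVf ?scale1r ?mulf_neq0.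
exists (l0 * b i 0 / (kap * \det A0) * (b i 0 / kap)).
  by rewrite !mulf_neq0 ?invr_eq0 ?mulf_neq0.
by rewrite linearZ /= -scalemxAl -scalemxAr scalerA.
Qed.

End ChartInverse.

Section RankOne.
Variables (F : fieldType) (n : nat).

Lemma pid_mx1_delta m : pid_mx 1 =
  (delta_mx 0 0 : 'M[F]_(n.+1, 1)) *m (delta_mx 0 0 : 'M[F]_(1, m.+1)).
Proof.
apply/matrixP => i j; rewrite !mxE big_ord1 !mxE -!val_eqE /=.
by case: i => [[|i] ?]; case: j => [[|j] ?]; rewrite /= ?mulr1 ?mulr0 ?mul0r ?andbF.
Qed.

Lemma mxrank1_outer (M : 'M[F]_n.+1) : \rank M = 1%N ->
  exists a b : 'cV[F]_n.+1, [/\ a != 0, b != 0 & M = a *m b^T].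
Proof.
move=> r1; have := mulmx_ebase M; rewrite r1 pid_mx1_delta => E.
exists (col_ebase M *m delta_mx 0 0), ((delta_mx 0 0 *m row_ebase M)^T).
rewrite trmxK -mulmxA (mulmxA (delta_mx _ _)) mulmxA E; split => //.
  by apply: contra_eq_neq r1 => a0; rewrite -E !mulmxA a0 !mul0mx mxrank0.
apply: contra_eq_neq r1 => b0.
by rewrite -E -!mulmxA -(trmxK (delta_mx _ _ *m row_ebase M)) b0 trmx0 !mulmx0 mxrank0.
Qed.

Lemma unitmx_extend (a : 'cV[F]_n.+1) : a != 0 ->
  exists2 X : 'M[F]_n.+1, X \in unitmx & X *m delta_mx 0 0 = a.
Proof.
move=> an0; have r1 : \rank a = 1%N by rewrite -mxrank_tr rank_rV trmx_eq0 an0.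
have := mulmx_ebase a; rewrite r1 (pid_mx1_delta 0) mul_delta_mx.
rewrite [row_ebase a]mx11_scalar -mulmxA mul_mx_scalar => E.
have := row_ebase_unit a; rewrite unitmxE [row_ebase a]mx11_scalar det_scalar expr1 => u.
exists (row_ebase a 0 0 *: col_ebase a); first by rewrite unitmxZ ?col_ebase_unit.
by rewrite -scalemxAl scalemxAr.
Qed.

Lemma sym_mul_outerP (M : 'M[F]_n) (a b : 'cV[F]_n) : b != 0 ->
  (forall v v', (M *m (a *m b^T)) v v' = (M *m (a *m b^T)) v' v) <->
  exists l, M *m a = l *: b.
Proof.
move=> /cV0Pn[q bq]; split=> [Hs|[l El] v v']; last first.
  by rewrite mulmxA El -scalemxAl !mxE !big_ord1 !mxE [b v _ * _]mulrC.
exists ((M *m a) q 0 / b q 0); apply/matrixP => v y; rewrite [y]ord1 mxE.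
have := Hs v q; rewrite !mulmxA !mxE !big_ord1 !mxE => E.
by rewrite mulrAC -E mulfK.
Qed.

End RankOne.

Section Conjugation.
Variables (F : fieldType) (n : nat).
Implicit Types (Y Z : 'M[F]_n).

Lemma quot_comm_conj Y Z (A0 A1 A2 : 'M[F]_n) :
  quot_comm (Y *m A0 *m Z) (Y *m A1 *m Z) (Y *m A2 *m Z) =
  (\det Z ^+ 2 * \det Y) *: (Y *m quot_comm A0 A1 A2 *m \adj Y).
Proof.
have eB (A : 'M_n) : quot_mx (Y *m A0 *m Z) (Y *m A *m Z) = \det Z *: (Y *m quot_mx A0 A *m \adj Y).
  rewrite /quot_mx !adj_mulmx -!mulmxA (mulmxA Z) mul_mx_adj mul_scalar_mx.
  by rewrite -!scalemxAr.
have eM (A B : 'M_n) : Y *m A *m \adj Y *m (Y *m B *m \adj Y) = \det Y *: (Y *m (A *m B) *m \adj Y).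
  by rewrite !mulmxA -(mulmxA _ (\adj Y)) mul_adj_mx mul_mx_scalar -!scalemxAl.
rewrite /quot_comm !eB -!scalemxAl -!scalemxAr !scalerA -scalerBr !eM.
by rewrite -scalerBr scalerA -expr2 mulmxBr mulmxBl.
Qed.

Lemma adj_quot_comm_conj_neq0 Y Z (A0 A1 A2 : 'M[F]_n) :
  Y \in unitmx -> Z \in unitmx -> \adj (quot_comm A0 A1 A2) != 0 ->
  \adj (quot_comm (Y *m A0 *m Z) (Y *m A1 *m Z) (Y *m A2 *m Z)) != 0.
Proof.
move=> uY uZ; apply: contraNneq.
have s0 : \det Z ^+ 2 * \det Y != 0 by rewrite mulf_neq0 ?expf_neq0 // -unitfE -unitmxE.
rewrite quot_comm_conj adjZ !adj_mulmx => /eqP.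
rewrite scalemx_eq0 expf_eq0 (negPf s0) andbF /= => /eqP E.
have uaY := unitmx_adj uY; have uaaY := unitmx_adj uaY.
apply/eqP; rewrite -(mulKmx uaaY (\adj _)) -(mulmxK uaY (_ *m \adj _)) -(mulmxA (\adj (\adj Y))) E.
by rewrite mul0mx mulmx0.
Qed.

End Conjugation.

Section RampShift.
Variables (F : fieldType) (n : nat).

Definition ramp_mx : 'M[F]_n.+1 := diag_mx (\row_i (i : nat)%:R).
Definition shift_mx : 'M[F]_n.+1 := \matrix_(i, j) ((j : nat) == i.+1)%:R.

Lemma ramp_mx_e0 : ramp_mx *m delta_mx 0 0 = 0 :> 'cV[F]_n.+1.
Proof.
apply/matrixP => i j; rewrite mul_diag_mx !mxE.
by case: (i =P 0) => [->|_]; rewrite ?mul0r ?mulr0 ?andbF.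
Qed.

Lemma shift_mx_e0 : shift_mx *m delta_mx 0 0 = 0 :> 'cV[F]_n.+1.
Proof.
apply/matrixP => i j; rewrite !mxE big1 // => k _; rewrite !mxE.
by case: (k =P 0) => [->|_]; rewrite ?mul0r //= mulr0.
Qed.

Lemma quot_comm_ramp_shift : quot_comm 1%:M ramp_mx shift_mx = - shift_mx.
Proof.
rewrite /quot_comm /quot_mx adj1 !mulmx1 /ramp_mx mul_diag_mx mul_mx_diag.
apply/matrixP => i j; rewrite !mxE mulrC -mulrBr.
by case: eqP => [->|_]; rewrite ?mul0r ?oppr0 // mul1r mulrSr opprD addrA subrr add0r.
Qed.

Lemma adj_shift_mx_neq0 : \adj shift_mx != 0.
Proof.
apply/matrix0Pn; exists 0, ord_max; rewrite mxE /cofactor.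
have -> : row' ord_max (col' 0 shift_mx) = 1%:M.
  apply/matrixP => p q; rewrite !mxE /= /bump leq0n (leqNgt n p) ltn_ord add0n add1n.
  by rewrite eqSS eq_sym.
by rewrite det1 mulr1 signr_eq0.
Qed.

Lemma adj_quot_comm_ramp_shift_neq0 : \adj (quot_comm 1%:M ramp_mx shift_mx) != 0.
Proof.
rewrite quot_comm_ramp_shift -scaleN1r adjZ scalemx_eq0 negb_or adj_shift_mx_neq0.
by rewrite expf_neq0 ?oppr_eq0 ?oner_eq0.
Qed.

End RampShift.

Section HomogeneousMatrices.
Variables (R : comNzRingType) (N : nat).
Local Notation P := {mpoly R[N]}.

Definition homog_mx (d m k : nat) (M : 'M[P]_(m, k)) := forall i j, M i j \is d.-homog.

Lemma homog_mxM d1 d2 m k l (A : 'M[P]_(m, k)) (B : 'M[P]_(k, l)) :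
  homog_mx d1 A -> homog_mx d2 B -> homog_mx (d1 + d2) (A *m B).
Proof. by move=> hA hB i j; rewrite mxE rpred_sum // => x _; apply: dhomogM. Qed.

Lemma homog_mxB d m k (A B : 'M[P]_(m, k)) :
  homog_mx d A -> homog_mx d B -> homog_mx d (A - B).
Proof. by move=> hA hB i j; rewrite !mxE rpredB. Qed.

Lemma homog_mx_tr d m k (A : 'M[P]_(m, k)) : homog_mx d A -> homog_mx d A^T.
Proof. by move=> hA i j; rewrite mxE. Qed.

Lemma homog_mx_col d m k (A : 'M[P]_(m, k)) j : homog_mx d A -> homog_mx d (col j A).
Proof. by move=> hA i l; rewrite mxE. Qed.

Lemma homog_prod k d (F : 'I_k -> P) : (forall i, F i \is d.-homog) ->
  \prod_(i < k) F i \is (k * d).-homog.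
Proof.
elim: k F => [|k IH] F hF; first by rewrite big_ord0 mul0n dhomog1.
by rewrite big_ord_recr mulSn addnC dhomogM ?IH.
Qed.

Lemma homog_det d m (A : 'M[P]_m) : homog_mx d A -> \det A \is (m * d).-homog.
Proof.
move=> hA; rewrite rpred_sum // => s _.
have hp := homog_prod (fun i => hA i (s i)).
by case: (odd_perm s); rewrite /= ?expr0 ?expr1 ?mul1r ?mulN1r ?rpredN.
Qed.

Lemma homog_adj d m (A : 'M[P]_m.+1) : homog_mx d A -> homog_mx (m * d) (\adj A).
Proof.
move=> hA i j; rewrite mxE /cofactor -signr_odd.
have hm : homog_mx d (row' j (col' i A)) by move=> x y; rewrite !mxE.
by case: (odd _); rewrite /= ?expr0 ?expr1 ?mul1r ?mulN1r ?rpredN homog_det.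
Qed.

End HomogeneousMatrices.

Lemma meval_line (R : comNzRingType) N (p : {mpoly R[N]}) (x y : 'I_N -> R) :
  exists q : {poly R}, forall t, q.[t] = meval (fun i => x i + y i * t) p.
Proof.
exists (mmap polyC (fun i => (x i)%:P + (y i)%:P * 'X) p) => t.
rewrite mevalE -[LHS]/(horner_eval t _) rmorph_sum; apply: eq_bigr => m _.
rewrite rmorphM rmorph_prod /= horner_evalE hornerC.
congr (_ * _); apply: eq_bigr => i _; rewrite rmorphXn /= horner_evalE.
by rewrite hornerD hornerC hornerM hornerC hornerX.
Qed.

Lemma poly_eq0_off_roots (R : numDomainType) (q r : {poly R}) : r != 0 ->
  (forall t, r.[t] != 0 -> q.[t] = 0) -> q = 0.
Proof.
move=> rn0 qr0; suff /eqP : q * r = 0 by rewrite mulf_eq0 (negPf rn0) orbF => /eqP.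
apply: (@roots_geq_poly_eq0 _ _ [seq (i%:R : R) | i <- iota 0 (size (q * r))]).
- apply/allP => t _; rewrite rootE hornerM.
  by have [->|/qr0->] := eqVneq r.[t] 0; rewrite ?mulr0 ?mul0r.
- by rewrite map_inj_uniq ?iota_uniq // => a b /eqP; rewrite eqr_nat => /eqP.
- by rewrite size_map size_iota.
Qed.

Definition line (phi phi0 : TPoint) (t : CC) : TPoint := fun s => phi s + (phi0 s - phi s) * t.

Lemma meval_line_eq0 (P : {mpoly CC[#|PairIdx|]}) (h : {mpoly CC[#|TIdx|]})
    (phi phi0 : TPoint) (psi : PPoint) :
  meval (evT phi0) h != 0 ->
  (forall t, meval (evT (line phi phi0 t)) h != 0 ->
     meval (evTP (line phi phi0 t) psi) P = 0) ->
  meval (evTP phi psi) P = 0.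
Proof.
move=> h0 HP.
have [q Hq] := meval_line P (evTP phi psi)
  (fun i => if enum_val i is inl s then phi0 s - phi s else 0).
have [r Hr] := meval_line h (evT phi) (fun i => phi0 (enum_val i) - phi (enum_val i)).
have Hq' t : q.[t] = meval (evTP (line phi phi0 t) psi) P.
  rewrite Hq; apply: meval_eq => i; rewrite /evTP /line.
  by case: enum_val => // p; rewrite mul0r addr0.
have rn0 : r != 0.
  have r1 : r.[1] = meval (evT phi0) h.
    by rewrite Hr; apply: meval_eq => i; rewrite mulr1 addrC subrK.
  by apply: contraNneq h0 => r0; rewrite -r1 r0 horner0.
have q0 : q = 0 by apply: (poly_eq0_off_roots rn0) => t; rewrite Hr Hq' => /HP.
have := Hq' 0; rewrite q0 horner0 => ->.
by apply: meval_eq => i; rewrite /evTP /line; case: enum_val => // s; rewrite mulr0 addr0.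
Qed.

Definition slice_mx (phi : TPoint) (r : 'I_3) : 'M[CC]_4 := \matrix_(v, w) phi ((r, v), w).

Definition generic_mx (r : 'I_3) : 'M[{mpoly CC[#|TIdx|]}]_4 :=
  \matrix_(v, w) 'X_(enum_rank ((r, v), w)).

Lemma meval_generic_mx phi r : map_mx (meval (evT phi)) (generic_mx r) = slice_mx phi r.
Proof. by apply/matrixP => v w; rewrite !mxE mevalXU /evT enum_rankK. Qed.

Lemma homog_generic_mx r : homog_mx 1 (generic_mx r).
Proof. by move=> v w; rewrite mxE dhomogX /= mdeg1. Qed.

Lemma homog_generic_quot_comm :
  homog_mx 8 (quot_comm (generic_mx 0) (generic_mx 1) (generic_mx 2)).
Proof.
have hB r : homog_mx 4 (quot_mx (generic_mx 0) (generic_mx r)).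
  exact: homog_mxM (homog_generic_mx r) (homog_adj (homog_generic_mx 0)).
exact: homog_mxB (homog_mxM (hB 1) (hB 2)) (homog_mxM (hB 2) (hB 1)).
Qed.

Definition chart : finType := 'I_#|{: 'I_4 * 'I_4}|.

Definition den_poly (c : chart) : {mpoly CC[#|TIdx|]} :=
  chart_den (generic_mx 0) (generic_mx 1) (generic_mx 2) (enum_val c).1 (enum_val c).2.

Definition inv_poly (c : chart) (p : PIdx) : {mpoly CC[#|TIdx|]} :=
  chart_inv (generic_mx 0) (generic_mx 1) (generic_mx 2) (enum_val c).2 p.1 p.2.

Lemma meval_den_poly phi c : meval (evT phi) (den_poly c) =
  chart_den (slice_mx phi 0) (slice_mx phi 1) (slice_mx phi 2) (enum_val c).1 (enum_val c).2.
Proof. by rewrite /den_poly map_chart_den !meval_generic_mx. Qed.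

Lemma meval_inv_poly phi c p : meval (evT phi) (inv_poly c p) =
  chart_inv (slice_mx phi 0) (slice_mx phi 1) (slice_mx phi 2) (enum_val c).2 p.1 p.2.
Proof. by rewrite -!meval_generic_mx -map_chart_inv mxE. Qed.

Lemma den_poly_homog c : homog_of_deg 28 (den_poly c).
Proof.
rewrite /homog_of_deg -dhomogE /den_poly /chart_den.
exact: dhomogM (homog_det (homog_generic_mx 0)) (homog_adj homog_generic_quot_comm _ _).
Qed.

Lemma inv_poly_homog c p : homog_of_deg 51 (inv_poly c p).
Proof.
rewrite /homog_of_deg -dhomogE /inv_poly /chart_inv.
have hk := homog_mx_col (enum_val c).2 (homog_adj homog_generic_quot_comm).
exact: homog_mxM (homog_mxM (homog_adj (homog_generic_mx 0)) hk) (homog_mx_tr hk) p.1 p.2.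
Qed.

Lemma composite_slice phi psi r v v' :
  composite phi psi r v v' = (slice_mx phi r *m psi_mx psi) v v'.
Proof. by rewrite /composite mxE; apply: eq_bigr => w _; rewrite !mxE. Qed.

Lemma factors_through_outerP phi psi (a b : 'cV[CC]_4) :
  b != 0 -> psi_mx psi = a *m b^T ->
  factors_through_RS2V phi psi <-> forall r, exists l, slice_mx phi r *m a = l *: b.
Proof.
move=> bn0 Epsi; split=> [fac r | Hl r v v'].
  by apply: (sym_mul_outerP _ _ bn0).1 => v v'; rewrite -Epsi -!composite_slice fac.
by rewrite !composite_slice Epsi; apply: (sym_mul_outerP _ _ bn0).2.
Qed.

Lemma F1cone_outer phi psi : F1cone phi psi ->
  exists a b : 'cV[CC]_4, [/\ a != 0, b != 0, psi_mx psi = a *m b^T &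
    forall r, exists l, slice_mx phi r *m a = l *: b].
Proof.
case=> _ [/mxrank1_outer [a [b [an0 bn0 Epsi]]] fac].
by exists a, b; split => //; apply: (factors_through_outerP _ bn0 Epsi).1.
Qed.

Lemma F1cone_inv_poly c phi psi :
  F1cone phi psi -> meval (evT phi) (den_poly c) != 0 ->
  exists k : CC, k != 0 /\ forall p, psi p = k * meval (evT phi) (inv_poly c p).
Proof.
move=> /F1cone_outer [a [b [an0 bn0 Epsi Hl]]]; rewrite meval_den_poly => hn0.
have [l0 e0] := Hl 0; have [l1 e1] := Hl 1; have [l2 e2] := Hl 2.
have [k kn0 /matrixP Ek] := outer_chart_inv an0 bn0 e0 e1 e2 hn0.
exists k; split => // -[w v].
by move: (Ek w v); rewrite -Epsi meval_inv_poly !mxE.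
Qed.

Lemma slice_line phi phi0 t r :
  slice_mx (line phi phi0 t) r = slice_mx phi r + t *: (slice_mx phi0 r - slice_mx phi r).
Proof. by apply/matrixP => v w; rewrite !mxE mulrC. Qed.

Lemma F1cone_line phi phi0 psi (a b : 'cV[CC]_4) t :
  F1cone phi psi -> psi_mx psi = a *m b^T -> b != 0 ->
  (forall r, exists l, slice_mx phi0 r *m a = l *: b) ->
  (exists s, line phi phi0 t s != 0) -> F1cone (line phi phi0 t) psi.
Proof.
case=> _ [r1 fac] Epsi bn0 Hl0 nz; do 2!split=> //.
apply: (factors_through_outerP _ bn0 Epsi).2 => r.
have [l El] := (factors_through_outerP phi bn0 Epsi).1 fac r; have [l' El'] := Hl0 r.
exists (l + t * (l' - l)).
by rewrite slice_line mulmxDl -scalemxAl mulmxBl El El' -scalerBl scalerA -scalerDl.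
Qed.

Lemma den_poly_support c phi : meval (evT phi) (den_poly c) != 0 -> exists s, phi s != 0.
Proof.
rewrite meval_den_poly mulf_eq0 negb_or => /andP[dn0 _].
have /matrix0Pn[v [w]] : slice_mx phi 0 != 0 by apply: contraNneq dn0 => ->; rewrite det0.
by rewrite mxE; exists ((0, v), w).
Qed.

Definition model_mx (r : 'I_3) : 'M[CC]_4 :=
  if r == 0 then 1%:M else if r == 1 then ramp_mx CC 3 else shift_mx CC 3.

Lemma model_mx_e0 r : exists l, model_mx r *m delta_mx 0 0 = l *: (delta_mx 0 0 : 'cV[CC]_4).
Proof.
rewrite /model_mx; case: (r == 0); first by exists 1; rewrite mul1mx scale1r.
by exists 0; case: (r == 1); rewrite scale0r ?ramp_mx_e0 ?shift_mx_e0.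
Qed.

(* Transport the model [(1, ramp, shift)], which stabilises the line of
   [e_0], to a point whose slices map [a] into the line of [b]. *)
Lemma generic_point (a b : 'cV[CC]_4) : a != 0 -> b != 0 ->
  exists phi0, (forall r, exists l, slice_mx phi0 r *m a = l *: b) /\
    exists c, meval (evT phi0) (den_poly c) != 0.
Proof.
move=> an0 bn0; have [X uX eX] := unitmx_extend an0; have [Y uY eY] := unitmx_extend bn0.
pose phi0 : TPoint := fun s => (Y *m model_mx s.1.1 *m invmx X) s.1.2 s.2.
have slice0 r : slice_mx phi0 r = Y *m model_mx r *m invmx X.
  by apply/matrixP => v w; rewrite mxE.
exists phi0; split=> [r|].
  have [l El] := model_mx_e0 r; exists l.
  by rewrite slice0 -mulmxA -eX (mulKmx uX) -mulmxA El -scalemxAr eY.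
have uXi : invmx X \in unitmx by rewrite unitmx_inv.
have /matrix0Pn[i [j nz]] :=
  adj_quot_comm_conj_neq0 uY uXi (adj_quot_comm_ramp_shift_neq0 CC 3).
exists (enum_rank ((i, j) : 'I_4 * 'I_4)).
rewrite meval_den_poly enum_rankK !slice0 mulf_neq0 //.
by rewrite -unitfE -unitmxE mulmx1 unitmx_mul uY.
Qed.

Theorem mainTheorem7 : proj_birational_onto_image F1cone.
Proof.
exists #|{: 'I_4 * 'I_4}|, den_poly, (fun _ => 28%N), (fun _ => 51%N), inv_poly.
split; first exact: den_poly_homog.
split; first exact: inv_poly_homog.
split; first by move=> c phi psi; apply: F1cone_inv_poly.
move=> P HU phi psi Fpp.
have [a [b [an0 bn0 Epsi _]]] := F1cone_outer Fpp.
have [phi0 [Hl0 [c hc]]] := generic_point an0 bn0.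
apply: (meval_line_eq0 hc) => t ht; apply: HU; split; last by exists c.
exact: F1cone_line Fpp Epsi bn0 Hl0 (den_poly_support ht).
Qed.
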